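(* Let $X\subseteq\mathbb{R}^n$ and let $F:X\rightrightarrows\mathbb{R}^m$ be a set-valued function with open graph and nonempty monovex values. Then $F$ has a continuous selection: there is a continuous function $f:X\to\mathbb{R}^m$ with $f(x)\in F(x)$ for every $x\in X$.
   Context: A set $B \subseteq \mathbb{R}^m$ is monovex if for every $x,y \in B$ there is a continuous path $\gamma:[0,1]\to B$ with $\gamma(0)=x$, $\gamma(1)=y$ and each coordinate $\gamma_i$ monotone (nondecreasing or nonincreasing). The graph of $F$ is $\{(x,y)\in X\times\mathbb{R}^m: y\in F(x)\}$, and ''open graph'' means this set is open in $X\times\mathbb{R}^m$. *)

From HB Require Import structures.
From mathcomp Require Import all_boot all_order all_algebra.
From mathcomp Require Import all_classical all_reals all_analysis.
Set Implicit Arguments. Unset Strict Implicit. Unset Printing Implicit Defensive.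
Import Order.TTheory GRing.Theory Num.Theory numFieldNormedType.Exports.
Local Open Scope classical_set_scope.
Local Open Scope ring_scope.

(* Points of R^k are row vectors 'rV[R]_k with the (sup-)norm topology
   provided by MathComp-Analysis. *)

Definition monotone01 (R : realType) (g : R -> R) : Prop :=
  {in `[0, 1]%R &, {homo g : s t / s <= t}} \/
  {in `[0, 1]%R &, {homo g : s t / s <= t >-> t <= s}}.

Definition monovex (R : realType) (m : nat) (B : set 'rV[R]_m) : Prop :=
  forall x y, B x -> B y ->
    exists gamma : R -> 'rV[R]_m,
      {within `[0, 1]%classic, continuous gamma} /\
      gamma 0 = x /\ gamma 1 = y /\
      (forall t, t \in `[0, 1]%R -> B (gamma t)) /\
      (forall i : 'I_m, monotone01 (fun t => gamma t ord0 i)).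

Definition open_graph (R : realType) (n m : nat) (X : set 'rV[R]_n)
    (F : 'rV[R]_n -> set 'rV[R]_m) : Prop :=
  forall x y, X x -> F x y ->
    exists2 e : R, 0 < e &
      forall x' y', X x' -> `|x' - x| < e -> `|y' - y| < e -> F x' y'.

From HB Require Import structures.
From mathcomp Require Import all_boot all_order all_algebra.
From mathcomp Require Import all_classical all_reals all_analysis.
From mathcomp Require Import ring lra.
Import Order.TTheory GRing.Theory Num.Theory numFieldNormedType.Exports.
Import Num.Def.
Local Open Scope classical_set_scope.
Local Open Scope ring_scope.
Set Implicit Arguments. Unset Strict Implicit. Unset Printing Implicit Defensive.

(* Coordinate by coordinate.  Once a continuous g agreeing with some point of
   F x on the coordinates below i is built, the admissible values c of
   coordinate i (those of points of F x that agree with g x below i) form a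
   multifunction of x with open graph and interval values: a coordinatewise
   monotone path in F x between two admissible points is constant on the
   coordinates below i, and the intermediate value theorem fills in
   coordinate i.  Such an interval-valued multifunction has a continuous
   selection: for the k-th rational q_k, let radius k x <= 1 be the largest
   radius of a ball around x on which q_k stays admissible.  These radii are
   1-Lipschitz, and after making them locally finite they weight an average
   of admissible rationals that depends continuously on x and, lying between
   two of them, is admissible. *)

Lemma sum_ord_vanishing (V : zmodType) (F : nat -> V) K1 K2 :
  (forall k, (K1 <= k)%N -> F k = 0) -> (forall k, (K2 <= k)%N -> F k = 0) ->
  \sum_(k < K1) F k = \sum_(k < K2) F k.
Proof.
wlog le12 : K1 K2 / (K1 <= K2)%N => [wlog_le F1 F2|F1 _].
  by have [/wlog_le->//|/ltnW/wlog_le->] := leqP K1 K2.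
rewrite -!(big_mkord xpredT) (big_cat_nat (leq0n K1) le12) /=.
rewrite [X in _ = _ + X]big_nat_cond [X in _ = _ + X]big1 ?addr0 //.
by move=> k /andP[/andP[/F1]].
Qed.

Lemma exists_le_weighted_mean (R : realFieldType) K (w q : nat -> R) :
  (forall k, 0 <= w k) -> (exists2 j, (j < K)%N & 0 < w j) ->
  exists2 k, 0 < w k &
    q k <= (\sum_(i < K) w i * q i) / \sum_(i < K) w i.
Proof.
move=> w_ge0 [j jK wj_gt0].
set D := \sum_(i < K) w i; set t := _ / D.
have D_gt0 : 0 < D.
  rewrite /D (bigD1 (Ordinal jK)) //= ltr_pwDl // sumr_ge0 // => i _.
apply: contrapT => /forall2NP q_gt_t.
have dev_ge0 i : 0 <= w i * (q i - t).
  have [->|wi_gt0] := eqVneq (w i) 0; first by rewrite mul0r.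
  have {}wi_gt0 : 0 < w i by rewrite lt_def wi_gt0 w_ge0.
  case: (q_gt_t i) => [/negP|]; first by rewrite wi_gt0.
  by move/negP; rewrite -ltNge => /ltW tq; rewrite mulr_ge0 ?subr_ge0 // ltW.
have : 0 < \sum_(i < K) w i * (q i - t).
  rewrite (bigD1 (Ordinal jK)) //= ltr_pwDl ?sumr_ge0 //.
  apply: mulr_gt0 => //; rewrite subr_gt0.
  by case: (q_gt_t j) => /negP; rewrite ?wj_gt0 // -ltNge.
have -> : \sum_(i < K) w i * (q i - t) = \sum_(i < K) w i * q i - t * D.
  by rewrite /D mulr_sumr -sumrB; apply: eq_bigr => i _; ring.
by rewrite /t divfK ?gt_eqF // subrr ltxx.
Qed.

Lemma rV_coord_le_norm (R : realDomainType) m (v : 'rV[R]_m) i :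
  `|v ord0 i| <= `|v|.
Proof. by rewrite [leRHS]mx_normrE; apply: (le_bigmax _ _ (ord0, i)). Qed.

Lemma rV_norm_lt (R : realDomainType) m (v : 'rV[R]_m) e : 0 < e ->
  (forall i, `|v ord0 i| < e) -> `|v| < e.
Proof.
move=> e_gt0 v_lt; rewrite [ltLHS]mx_normrE.
by apply/bigmax_ltP; split => // -[a i] _ /=; rewrite (ord1 a).
Qed.

Lemma within_continuous_dist_lt (R : numFieldType) (V W : normedModType R)
    (X : set V) (g : V -> W) : {within X, continuous g} ->
  forall x, X x -> forall e, 0 < e -> exists2 d, 0 < d &
    forall x', X x' -> `|x - x'| < d -> `|g x - g x'| < e.
Proof.
move=> /subspace_continuousP g_cont x Xx e e_gt0.
have /cvgrPdist_lt/(_ e e_gt0)/nbhs_ballP[d d_gt0 near_x] := g_cont x Xx.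
by exists d => // x' Xx' xx'; apply: near_x => //; rewrite -ball_normE.
Qed.

Lemma monotone01_const (R : realType) (h : R -> R) : monotone01 h ->
  h 0 = h 1 -> {in `[0, 1], forall t, h t = h 0}.
Proof.
have i0 : (0 : R) \in `[0, 1] by rewrite in_itv /= lexx ler01.
have i1 : (1 : R) \in `[0, 1] by rewrite in_itv /= lexx ler01.
move=> h_mono h01 t t01; have := t01; rewrite in_itv /= => /andP[t_ge0 t_le1].
apply/eqP; rewrite eq_le; case: h_mono => h_mono.
  by rewrite h01 h_mono //= -h01 h_mono.
by rewrite h_mono //= h01 h_mono.
Qed.

Definition rat_enum (R : realType) (k : nat) : R :=
  if @unpickle rat k is Some r then ratr r else 0.

Lemma rat_enum_pickle (R : realType) (r : rat) :
  rat_enum R (pickle r) = ratr r.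
Proof. by rewrite /rat_enum pickleK. Qed.

Section IntervalSelection.
Variables (R : realType) (V : normedModType R) (X : set V) (P : V -> set R).

Definition radius_set (k : nat) (x : V) : set R :=
  [set e | 0 <= e <= 1 /\
     forall x', X x' -> `|x' - x| < e -> P x' (rat_enum R k)].

Definition radius k x : R := sup (radius_set k x).

Lemma radius_set0 k x : radius_set k x 0.
Proof. by split=> [|x' _]; rewrite ?lexx ?ler01 ?normr_lt0. Qed.

Lemma has_sup_radius_set k x : has_sup (radius_set k x).
Proof. by split; [exists 0; apply: radius_set0 | exists 1 => e [/andP[]]]. Qed.

Lemma radius_ge0 k x : 0 <= radius k x.
Proof. exact: sup_upper_bound (has_sup_radius_set k x) _ (radius_set0 k x). Qed.

Lemma radius_le1 k x : radius k x <= 1.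
Proof.
by apply: ge_sup; [exists 0; apply: radius_set0 | move=> e [/andP[]]].
Qed.

Lemma radius_lipschitz k x y : radius k x - `|x - y| <= radius k y.
Proof.
rewrite lerBlDr; apply: ge_sup; first by exists 0; apply: radius_set0.
move=> e [/andP[e_ge0 e_le1] He]; rewrite -lerBlDr.
have [|xy_lt_e] := leP e `|x - y|.
  by rewrite -subr_le0 => /le_trans; apply; apply: radius_ge0.
apply: sup_upper_bound (has_sup_radius_set k y) _ _; split.
  by rewrite subr_ge0 (ltW xy_lt_e) /=; apply: le_trans e_le1; rewrite gerBl.
move=> x' Xx' x'y_lt; apply: He => //.
rewrite -(subrK y x') -addrA; apply: le_lt_trans (ler_normD _ _) _.
by rewrite (distrC y); lra.
Qed.

Lemma radius_continuous k : continuous (radius k).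
Proof.
move=> x; apply/cvgrPdist_lt => e e_gt0; near=> y.
have xy : `|x - y| < e by near: y; exact: cvgr_dist_lt.
have := radius_lipschitz k x y; have := radius_lipschitz k y x.
rewrite (distrC y) ltr_norml => *; apply/andP; split; lra.
Unshelve. all: by end_near.
Qed.

Lemma radius_gt0_mem k x : X x -> 0 < radius k x -> P x (rat_enum R k).
Proof.
move=> Xx /sup_adherent/(_ (has_sup_radius_set k x)).
rewrite subrr => -[e [_ He] e_gt0].
by apply: He => //; rewrite subrr normr0.
Qed.

Lemma sum_radius_ge0 k x : 0 <= \sum_(j < k) radius j x.
Proof. by rewrite sumr_ge0 // => j _; apply: radius_ge0. Qed.

(* Subtracting k times the earlier radii makes the weights locally finite:
   where radius j is at least r > 0, every weight of index k > max(j, 2/r)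
   vanishes. *)
Definition weight k x : R :=
  maxr 0 (radius k x - k%:R * \sum_(j < k) radius j x).

Lemma weight_ge0 k x : 0 <= weight k x.
Proof. by rewrite le_max lexx. Qed.

Lemma weight_gt0_radius k x : 0 < weight k x -> 0 < radius k x.
Proof.
rewrite lt_max ltxx /= => /lt_le_trans; apply.
by rewrite gerBl mulr_ge0 ?sum_radius_ge0.
Qed.

Lemma weight_continuous k : continuous (weight k).
Proof.
have sum_cont : continuous (fun x => \sum_(j < k) radius j x).
  apply: continuous_big => [|j _]; first exact: add_continuous.
  exact: radius_continuous.
move=> x; have -> : weight k =
    (fun=> 0) \max (fun y => radius k y - k%:R * \sum_(j < k) radius j y) by [].
apply: continuous_max; first exact: cst_continuous.
apply: continuousB; first exact: radius_continuous.
by apply: continuousM; [exact: cst_continuous | exact: sum_cont].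
Qed.

Lemma weight_locally_finite j x0 : 0 < radius j x0 ->
  exists K, forall x, `|x0 - x| < radius j x0 / 2 ->
    forall k, (K <= k)%N -> weight k x = 0.
Proof.
set r := radius j x0 => r_gt0.
exists (maxn j.+1 (Num.truncn (2 / r)).+1) => x x0x_lt k.
rewrite geq_max => /andP[jk truncn_lt_k].
have rjx_gt : r / 2 < radius j x.
  by have := radius_lipschitz j x0 x; rewrite -/r; lra.
have rj_le_sum : radius j x <= \sum_(i < k) radius i x.
  rewrite (bigD1 (Ordinal jk)) //= lerDl sumr_ge0 // => i _.
  exact: radius_ge0.
have k_gt : 2 / r < k%:R.
  by apply: lt_le_trans (truncnS_gt _) _; rewrite ler_nat.
have one_lt : 1 < k%:R * (r / 2).
  have half_inv : 2 / r * (r / 2) = 1 by field; rewrite gt_eqF.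
  by rewrite -[X in X < _]half_inv ltr_pM2r ?divr_gt0.
have : k%:R * (r / 2) <= k%:R * \sum_(i < k) radius i x.
  by rewrite ler_wpM2l //; lra.
by rewrite /weight => ?; apply: max_l; have := radius_le1 k x; lra.
Qed.

Definition weights_vanish_from K x := forall k, (K <= k)%N -> weight k x = 0.

Definition weight_sum K x := \sum_(k < K) weight k x.

Definition weighted_rat_sum K x := \sum_(k < K) weight k x * rat_enum R k.

(* Every index beyond which the weights vanish gives the same value
   (rat_selectionE); off X no such index need exist and the value is junk. *)
Definition rat_selection x : R :=
  let K := xget 0%N [set K | weights_vanish_from K x] in
  weighted_rat_sum K x / weight_sum K x.

Lemma rat_selectionE K x : weights_vanish_from K x ->
  rat_selection x = weighted_rat_sum K x / weight_sum K x.
Proof.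
move=> vanK; rewrite /rat_selection; case: xgetP => [K' _ vanK'|/(_ K)//].
congr (_ / _).
  apply: (sum_ord_vanishing (F := fun k => weight k x * rat_enum R k)).
    by move=> k /vanK'->; rewrite mul0r.
  by move=> k /vanK->; rewrite mul0r.
exact: (sum_ord_vanishing (F := weight^~ x)).
Qed.

Lemma exists_weight_gt0 K x : (exists j, 0 < radius j x) ->
  weights_vanish_from K x -> exists2 k, (k < K)%N & 0 < weight k x.
Proof.
move=> /ex_minnP[j rj_gt0 j_min] vanK.
have wj : weight j x = radius j x.
  rewrite /weight big1 => [|i _].
    by rewrite mulr0 subr0 max_r ?radius_ge0.
  apply/eqP; rewrite eq_le radius_ge0 andbT leNgt.
  by apply/negP => /j_min; rewrite leqNgt ltn_ord.
exists j; last by rewrite wj.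
rewrite ltnNge; apply: contraTN rj_gt0 => /vanK.
by rewrite wj => ->; rewrite ltxx.
Qed.

Lemma weight_sum_gt0 K x : (exists j, 0 < radius j x) ->
  weights_vanish_from K x -> 0 < weight_sum K x.
Proof.
move=> /exists_weight_gt0 Hpos /Hpos[k kK wk_gt0].
rewrite /weight_sum (bigD1 (Ordinal kK)) //= ltr_pwDl // sumr_ge0 // => i _.
exact: weight_ge0.
Qed.

Lemma weighted_mean_continuous K x : weight_sum K x != 0 ->
  {for x, continuous (fun y => weighted_rat_sum K y / weight_sum K y)}.
Proof.
have sum_cont (F : nat -> V -> R) : (forall k, continuous (F k)) ->
    continuous (fun y => \sum_(k < K) F k y).
  by move=> F_cont; apply: continuous_big => [|k _]; [exact: add_continuous|].
move=> sum_neq0.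
apply: (@continuousM _ _ (weighted_rat_sum K) (fun y => (weight_sum K y)^-1)).
  apply: (sum_cont (fun k y => weight k y * rat_enum R k)) => k y.
  by apply: continuousM; [exact: weight_continuous | exact: cst_continuous].
apply: (continuousV (s := weight_sum K)) => //.
exact: (sum_cont (fun k => weight k)) weight_continuous x.
Qed.

Hypothesis P_open : forall x c, X x -> P x c -> exists2 e : R, 0 < e &
  forall x' c', X x' -> `|x' - x| < e -> `|c' - c| < e -> P x' c'.
Hypothesis P_nonempty : forall x, X x -> exists c, P x c.
Hypothesis P_interval :
  forall x a b c, X x -> P x a -> P x b -> a <= c <= b -> P x c.

Lemma exists_radius_gt0 x : X x -> exists k, 0 < radius k x.
Proof.
move=> Xx; have [c Pxc] := P_nonempty Xx.
have [e e_gt0 He] := P_open Xx Pxc.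
have /rat_in_itvoo[r] : c - e < c + e by lra.
rewrite in_itv /= => /andP[ce_lt_r r_lt_ce].
have [e' e'_gt0 He'] : exists2 e' : R, 0 < e' &
    forall x' c', X x' -> `|x' - x| < e' -> `|c' - ratr r| < e' -> P x' c'.
  apply: P_open => //; apply: He => //; first by rewrite subrr normr0.
  by rewrite ltr_norml; apply/andP; split; lra.
exists (pickle r); apply: (@lt_le_trans _ _ (minr e' 1)).
  by rewrite lt_min e'_gt0 ltr01.
apply: sup_upper_bound (has_sup_radius_set _ x) _ _; split.
  by rewrite ge_min lexx orbT le_min (ltW e'_gt0) ler01.
move=> x' Xx' x'x_lt; rewrite rat_enum_pickle; apply: He' => //.
  by apply: lt_le_trans x'x_lt _; rewrite ge_min lexx.
by rewrite subrr normr0.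
Qed.

Lemma weights_vanish_near x : X x ->
  exists2 j, 0 < radius j x &
    exists K, \forall y \near x, weights_vanish_from K y.
Proof.
move=> Xx; have [j rj_gt0] := exists_radius_gt0 Xx.
have [K vanK] := weight_locally_finite rj_gt0.
have r2_gt0 : 0 < radius j x / 2 by rewrite divr_gt0.
exists j => //; exists K; near=> y; apply: vanK; near: y.
exact: cvgr_dist_lt.
Unshelve. all: by end_near.
Qed.

Lemma rat_selection_continuous : {within X, continuous rat_selection}.
Proof.
rewrite continuous_subspace_in => x; rewrite inE => Xx.
apply: continuous_subspaceT_for => //.
have [j rj_gt0 [K vanK]] := weights_vanish_near Xx.
have vanK_x := nbhs_singleton vanK.
have mean_cont :
    {for x, continuous (fun y => weighted_rat_sum K y / weight_sum K y)}.
  apply: weighted_mean_continuous.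
  by rewrite gt_eqF // weight_sum_gt0 //; exists j.
rewrite /prop_for /continuous_at /from_subspace (rat_selectionE vanK_x).
apply: cvg_trans mean_cont; apply: near_eq_cvg; near=> y.
by rewrite (rat_selectionE (K := K)) //; near: y.
Unshelve. all: by end_near.
Qed.

Lemma rat_selection_mem x : X x -> P x (rat_selection x).
Proof.
move=> Xx; have [j rj_gt0 [K /nbhs_singleton vanK]] := weights_vanish_near Xx.
have wpos := exists_weight_gt0 (ex_intro _ j rj_gt0) vanK.
have w_ge0 k : 0 <= weight k x by apply: weight_ge0.
have [k1 /weight_gt0_radius/(radius_gt0_mem Xx) Pk1 le1] :=
  exists_le_weighted_mean (rat_enum R) w_ge0 wpos.
have [k2 /weight_gt0_radius/(radius_gt0_mem Xx) Pk2 le2] :=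
  exists_le_weighted_mean (fun k => - rat_enum R k) w_ge0 wpos.
apply: P_interval Pk1 Pk2 _ => //; rewrite (rat_selectionE vanK).
apply/andP; split; first exact: le1.
move: le2; rewrite (eq_bigr (fun i : 'I_K => - (weight i x * rat_enum R i))).
  by rewrite sumrN mulNr lerN2.
by move=> i _; rewrite mulrN.
Qed.

End IntervalSelection.

Definition agree_below (T : Type) m k (y z : 'rV[T]_m) :=
  forall i : 'I_m, (i < k)%N -> y ord0 i = z ord0 i.

Section CoordinateStep.
Variables (R : realType) (n m : nat) (X : set 'rV[R]_n).
Variables (F : 'rV[R]_n -> set 'rV[R]_m) (g : 'rV[R]_n -> 'rV[R]_m) (i0 : 'I_m).

Definition coord_fiber x c :=
  exists y, [/\ F x y, agree_below i0 y (g x) & y ord0 i0 = c].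

Lemma coord_fiber_interval : (forall x, X x -> monovex (F x)) ->
  forall x a b c, X x ->
  coord_fiber x a -> coord_fiber x b -> a <= c <= b -> coord_fiber x c.
Proof.
move=> F_monovex x a b c /F_monovex Fx_monovex.
move=> [y1 [Fy1 agr1 <-]] [y2 [Fy2 agr2 <-]] y12c.
have [gam [gam_cont [gam0 [gam1 [gamF gam_mono]]]]] := Fx_monovex y1 y2 Fy1 Fy2.
have coord_cont : {within `[0, 1], continuous (fun t => gam t ord0 i0)}.
  move=> t.
  exact: continuous_comp (gam_cont t) (@coord_continuous _ _ _ ord0 i0 _).
have [|t t01 gamt] := @IVT R (fun t => gam t ord0 i0) 0 1 c ler01 coord_cont.
  by rewrite gam0 gam1 ge_min le_max; case/andP: y12c => -> ->; rewrite orbT.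
exists (gam t); split => [|i i_lt|//]; first exact: gamF.
have := monotone01_const (gam_mono i) _ t01.
by rewrite /= gam0 gam1 agr1 // agr2 // => /(_ erefl) ->.
Qed.

Lemma coord_fiber_open : open_graph X F -> {within X, continuous g} ->
  forall x c, X x -> coord_fiber x c -> exists2 e : R, 0 < e &
    forall x' c', X x' -> `|x' - x| < e -> `|c' - c| < e -> coord_fiber x' c'.
Proof.
move=> F_open g_cont x _ Xx [y [Fy agr <-]].
have [e e_gt0 He] := F_open x y Xx Fy.
have [d d_gt0 Hd] := within_continuous_dist_lt g_cont Xx e_gt0.
exists (minr e d) => [|x' c' Xx']; first by rewrite lt_min e_gt0 d_gt0.
rewrite !lt_min => /andP[x'x_lt_e x'x_lt_d] /andP[c'c_lt_e _].
exists (\row_j if (j < i0)%N then g x' ord0 j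
              else if j == i0 then c' else y ord0 j).
split; last by rewrite mxE ltnn eqxx.
- apply: He => //; apply: rV_norm_lt => // j; rewrite !mxE.
  case: ifP => [j_lt|_]; last by case: eqP => [->|_]; rewrite ?subrr ?normr0.
  have gxx'_lt : `|g x - g x'| < e by apply: Hd; rewrite // distrC.
  rewrite agr // distrC; apply: le_lt_trans gxx'_lt.
  by have := rV_coord_le_norm (g x - g x') j; rewrite !mxE.
- by move=> i i_lt; rewrite mxE i_lt.
Qed.

Lemma coord_selection_step : open_graph X F ->
  (forall x, X x -> monovex (F x)) -> {within X, continuous g} ->
  (forall x, X x -> exists y, F x y /\ agree_below i0 y (g x)) ->
  exists g' : 'rV[R]_n -> 'rV[R]_m, {within X, continuous g'} /\
    forall x, X x -> exists y, F x y /\ agree_below i0.+1 y (g' x).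
Proof.
move=> F_open F_monovex g_cont g_agree.
have fiber_open := coord_fiber_open F_open g_cont.
have fiber_ne x : X x -> exists c, coord_fiber x c.
  by move=> /g_agree[y [Fy agr]]; exists (y ord0 i0), y.
pose f := rat_selection X coord_fiber.
have f_cont : {within X, continuous f} :=
  rat_selection_continuous fiber_open fiber_ne.
pose h x := f x - g x ord0 i0.
exists (fun x => g x + h x *: delta_mx ord0 i0); split.
  move=> x; apply: (@continuousD R _ (subspace X) g); first exact: g_cont.
  apply: (@continuousZ R _ (subspace X) h); last exact: cst_continuous.
  apply: (@continuousB R _ (subspace X) f); first exact: f_cont.
  exact: continuous_comp (g_cont x) (@coord_continuous _ _ _ ord0 i0 _).
move=> x Xx.
have [y [Fy agr yi0]] :=
  rat_selection_mem fiber_open fiber_ne (coord_fiber_interval F_monovex) Xx.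
exists y; split => // i; rewrite ltnS leq_eqVlt => /predU1P[/val_inj->|i_lt].
  by rewrite !mxE !eqxx mulr1 addrC subrK yi0.
by rewrite !mxE eqxx agr // -val_eqE /= ltn_eqF // mulr0 addr0.
Qed.

End CoordinateStep.

Lemma partial_selection (R : realType) (n m : nat) (X : set 'rV[R]_n)
    (F : 'rV[R]_n -> set 'rV[R]_m) :
  open_graph X F -> (forall x, X x -> F x !=set0 /\ monovex (F x)) ->
  forall k, (k <= m)%N -> exists g : 'rV[R]_n -> 'rV[R]_m,
    {within X, continuous g} /\
    forall x, X x -> exists y, F x y /\ agree_below k y (g x).
Proof.
move=> F_open F_ne_monovex; elim=> [_|k IHk k_lt_m].
  exists (fun=> 0); split => [|x /F_ne_monovex[[y Fy] _]].
    exact: cst_continuous.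
  by exists y.
have [g [g_cont g_agree]] := IHk (ltnW k_lt_m).
have F_monovex x : X x -> monovex (F x) by case/F_ne_monovex.
exact: (@coord_selection_step _ _ _ _ _ g (Ordinal k_lt_m)).
Qed.

Theorem lemma3 (R : realType) (n m : nat) (X : set 'rV[R]_n)
    (F : 'rV[R]_n -> set 'rV[R]_m) :
  open_graph X F ->
  (forall x, X x -> F x !=set0 /\ monovex (F x)) ->
  exists f : 'rV[R]_n -> 'rV[R]_m,
    {within X, continuous f} /\ (forall x, X x -> F x (f x)).
Proof.
move=> F_open F_ne_monovex.
have [f [f_cont f_agree]] := partial_selection F_open F_ne_monovex (leqnn m).
exists f; split => // x /f_agree[y [Fy agr]].
by have -> : f x = y by apply/rowP => i; rewrite agr.
Qed.
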